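(* Let $n,k\in\mathbb{N}$ with at least one of $n,k$ nonzero. Then $T(n,\omega\cdot k)\le k^{n}$.
   Context: $\mathbb{N}=\{0,1,2,\dots\}$ and $[c]=\{1,\dots,c\}$. Each ordinal $\alpha$ is identified with the linearly ordered set of ordinals $\beta<\alpha$; $\omega$ is the order type of $\mathbb{N}$, and $\omega\cdot k$ is the ordinal obtained by concatenating $k$ copies of $\omega$ (its elements are $\omega\cdot b+a$ with $0\le b<k$, $a\in\mathbb{N}$). For a set $S$, $\binom{S}{n}$ denotes the set of $n$-element subsets of $S$. Two linearly ordered sets are order-equivalent ($\approx$) if there is an order-preserving bijection between them. For a linearly ordered set $S$ and $n\in\mathbb{N}$, the big Ramsey degree $T(n,S)$ is the least $t\in\mathbb{N}$ such that for every $c\ge 1$ and every coloring $\mathrm{COL}:\binom{S}{n}\to[c]$ there exists $S'\subseteq S$ with $S'\approx S$ and $|\mathrm{COL}(\binom{S'}{n})|\le t$; if no such $t$ exists, $T(n,S)=\infty$. *)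

From HB Require Import structures.
From mathcomp Require Import all_boot.
From mathcomp Require Import finmap.
Set Implicit Arguments. Unset Strict Implicit. Unset Printing Implicit Defensive.
Local Open Scope fset_scope.

(* The ordinal omega * k, realised as pairs (b, a) with b < k, a in nat,
   standing for omega*b + a; ordered lexicographically (strict order). *)
Definition omega_mul (k : nat) : choiceType := ('I_k * nat)%type.

Definition omega_lt (k : nat) : rel (omega_mul k) :=
  fun x y => (x.1 < y.1)%N || ((x.1 == y.1) && (x.2 < y.2)%N).

Definition order_equiv_sub (X : choiceType) (lt : rel X) (S' : X -> Prop) : Prop :=
  exists f : X -> X,
    (forall x y, lt x y -> lt (f x) (f y)) /\
    (forall x, S' (f x)) /\
    (forall y, S' y -> exists x, f x = y).

(* T(n,X) <= t iff this holds.
   (COL is given as a total function on finite subsets; only its values on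
   n-element subsets matter.) *)
Definition big_ramsey_bound (X : choiceType) (lt : rel X) (n t : nat) : Prop :=
  forall c : nat, (1 <= c)%N ->
  forall COL : {fset X} -> nat,
    (forall A : {fset X}, #|` A| = n -> (1 <= COL A <= c)%N) ->
    exists S' : X -> Prop,
      order_equiv_sub lt S' /\
      exists L : seq nat,
        (size L <= t)%N /\
        forall A : {fset X}, #|` A| = n -> (forall x, x \in A -> S' x) ->
          COL A \in L.

From mathcomp Require Import all_boot finmap.
From Stdlib Require Import ClassicalEpsilon.
Set Implicit Arguments. Unset Strict Implicit. Unset Printing Implicit Defensive.

(* Code omega*k by the naturals through omega*b + a |-> a*k + b, and call the
   sequence of blocks b met by an n-subset of the naturals, in increasing order,
   its type; there are k^n types.  Each type p turns the given colouring into a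
   colouring of n-subsets s of the naturals (colour the set of pairs (p_i, s_i)),
   and applying the infinite Ramsey theorem to these k^n colourings in turn gives
   a strictly increasing h making all of them constant.  Then x |-> (b, h (code x))
   embeds omega*k into itself, and every n-subset of its image is
   {(i mod k, h i) | i in I} for an n-subset I of the naturals, so its colour is
   the constant attached to the type of I. *)

Lemma exists_map_preimage (T : Type) (U : eqType) (f : T -> U) (s : seq U) :
  (forall y, y \in s -> exists x, f x = y) -> exists r, map f r = s.
Proof.
elim: s => [|y s IHs] s_im; first by exists [::].
have [x <-] := s_im y (mem_head y s).
have [r <-] : exists r, map f r = s.
  by apply: IHs => z zs; apply: s_im; rewrite inE zs orbT.
by exists (x :: r).
Qed.

Lemma infinite_pigeonhole m (v : nat -> nat) : (forall i, v i < m) ->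
  exists u, forall N, exists i, (N <= i) && (v i == u).
Proof.
elim: m v => [|m IHm] v v_lt; first by have := v_lt 0.
have [inf_m|fin_m] := classic (forall N, exists i, (N <= i) && (v i == m)).
  by exists m.
have [N not_after_N] := not_all_ex_not _ _ fin_m.
have v_shift_lt i : v (i + N) < m.
  rewrite ltn_neqAle -ltnS v_lt andbT; apply/eqP => vi_m.
  by apply: not_after_N; exists (i + N); rewrite leq_addl vi_m eqxx.
have [u inf_u] := IHm _ v_shift_lt; exists u => M.
have [i /andP[le_Mi vi_u]] := inf_u M.
by exists (i + N); rewrite vi_u (leq_trans le_Mi) ?leq_addr.
Qed.

Lemma increasing_enum (P : pred nat) : (forall N, exists i, (N <= i) && P i) ->
  exists e, {homo e : i j / i < j} /\ forall j, P (e j).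
Proof.
move=> infP; pose next N := ex_minn (infP N).
have next_spec N : (N <= next N) && P (next N) by rewrite /next; case: ex_minnP.
pose e j := next (iter j (succn \o next) 0).
exists e; split=> [|j]; last by case/andP: (next_spec (iter j (succn \o next) 0)).
apply: (@homo_ltn _ _ (fun i j => i < j)) => [? ? ?|j]; first exact: ltn_trans.
by rewrite /e iterS; case/andP: (next_spec (next (iter j (succn \o next) 0)).+1).
Qed.

Definition bounded_colouring n m (c : seq nat -> nat) :=
  forall s, sorted ltn s -> size s = n -> c s < m.

Definition monochromatic n (c : seq nat -> nat) (h : nat -> nat) (v : nat) :=
  forall s, sorted ltn s -> size s = n -> c (map h s) = v.

Section Monochromatic.
Variables (n m : nat) (c : seq nat -> nat) (h : nat -> nat).
Hypothesis h_incr : {homo h : i j / i < j}.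

Lemma bounded_colouring_map :
  bounded_colouring n m c -> bounded_colouring n m (c \o map h).
Proof.
move=> c_lt s s_sorted s_size; apply: c_lt; rewrite ?size_map //; exact: (homo_sorted h_incr).
Qed.

Lemma monochromatic_comp v g : {homo g : i j / i < j} ->
  monochromatic n c h v -> monochromatic n c (h \o g) v.
Proof.
move=> g_incr c_h s s_sorted s_size.
by rewrite map_comp c_h ?size_map //; exact: (homo_sorted g_incr).
Qed.

Lemma monochromatic_colour_lt v : bounded_colouring n m c -> monochromatic n c h v -> v < m.
Proof.
move=> c_lt c_h; rewrite -(c_h (iota 0 n)) ?size_iota ?iota_ltn_sorted //.
by apply: (bounded_colouring_map c_lt); rewrite ?size_iota ?iota_ltn_sorted.
Qed.

End Monochromatic.

Section RamseyStep.
Variables (n m : nat) (c : seq nat -> nat).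
Hypothesis ramsey_n : forall m (c : seq nat -> nat), bounded_colouring n m c ->
  exists h v, {homo h : i j / i < j} /\ monochromatic n c h v.
Hypothesis c_lt : bounded_colouring n.+1 m c.

Definition tail_colouring (g : nat -> nat) (s : seq nat) := c (g 0 :: map (g \o succn) s).

Lemma tail_colouring_bounded g :
  {homo g : i j / i < j} -> bounded_colouring n m (tail_colouring g).
Proof.
move=> g_incr s s_sorted s_size; apply: c_lt; last by rewrite /= size_map s_size.
rewrite map_comp -[_ :: _]/(map g (0 :: map succn s)); apply: (homo_sorted g_incr).
rewrite /= (path_sortedE ltn_trans) all_map; apply/andP; split; first exact/allP.
by apply: (homo_sorted (f := succn)) s_sorted => i j; rewrite ltnS.
Qed.

Definition homogenizes (g : nat -> nat) (p : (nat -> nat) * nat) :=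
  {homo p.1 : i j / i < j} /\ monochromatic n (tail_colouring g) p.1 p.2.

Definition homogenizer g := epsilon (inhabits (id, 0)) (homogenizes g).

Lemma homogenizerP g : {homo g : i j / i < j} -> homogenizes g (homogenizer g).
Proof.
move=> g_incr; apply: epsilon_spec.
by have [h [v hv]] := ramsey_n (tail_colouring_bounded g_incr); exists (h, v).
Qed.

(* stage i.+1 enumerates an infinite subset of the tail of stage i on which
   every n-set, completed by pivot i, gets the colour pivot_colour i. *)
Fixpoint stage i : nat -> nat :=
  if i is i'.+1 then stage i' \o succn \o (homogenizer (stage i')).1 else id.

Definition pivot i := stage i 0.

Definition pivot_colour i := (homogenizer (stage i)).2.

Lemma stage_incr i : {homo stage i : a b / a < b}.
Proof.
elim: i => [|i IHi] a b lt_ab //=.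
by apply: (IHi); rewrite ltnS; apply: (homogenizerP IHi).1.
Qed.

Lemma stage_add i d a : exists b, stage (i + d) a = stage i b.
Proof.
elim: d a => [|d IHd] a; first by exists a; rewrite addn0.
by rewrite addnS /=; apply: IHd.
Qed.

Lemma pivot_incr : {homo pivot : i j / i < j}.
Proof.
apply: (@homo_ltn _ _ (fun i j => i < j)) => [? ? ?|i]; first exact: ltn_trans.
by rewrite /pivot /=; apply: stage_incr.
Qed.

Lemma pivot_colour_lt i : pivot_colour i < m.
Proof.
have [hom_incr hom_mono] := homogenizerP (stage_incr i).
exact: (monochromatic_colour_lt hom_incr (tail_colouring_bounded (stage_incr i)) hom_mono).
Qed.

Lemma pivot_colourE i js : sorted ltn js -> all (leq i.+1) js -> size js = n ->
  c (pivot i :: map pivot js) = pivot_colour i.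
Proof.
move=> js_sorted js_gt js_size.
have [r r_pivot] : exists r, map (stage i.+1) r = map pivot js.
  apply: exists_map_preimage => _ /mapP[j /(allP js_gt) le_ij ->].
  rewrite /pivot -(subnKC le_ij); have [b ->] := stage_add i.+1 (j - i.+1) 0.
  by exists b.
have r_sorted : sorted ltn r.
  rewrite -(mono_sorted (leqW_mono (leq_mono (@stage_incr i.+1)))) r_pivot.
  exact: (homo_sorted pivot_incr).
have [_ hom_mono] := homogenizerP (stage_incr i).
rewrite -r_pivot /= map_comp -/(tail_colouring _ _) hom_mono //.
by rewrite -js_size -(size_map (stage i.+1)) r_pivot size_map.
Qed.

Lemma ramsey_succ : exists h v, {homo h : i j / i < j} /\ monochromatic n.+1 c h v.
Proof.
have [u inf_u] := infinite_pigeonhole pivot_colour_lt.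
have [e [e_incr e_u]] := increasing_enum inf_u.
exists (pivot \o e), u; split=> [i j lt_ij|[//|i s] /= s_sorted [s_size]].
  exact/pivot_incr/e_incr.
rewrite -(eqP (e_u i)) map_comp pivot_colourE ?size_map //.
  by apply/(homo_sorted e_incr)/(path_sorted s_sorted).
rewrite all_map; apply/allP => j j_s; apply: e_incr.
by move: s_sorted; rewrite (path_sortedE ltn_trans) => /andP[/allP/(_ j j_s)].
Qed.

End RamseyStep.

Theorem ramsey n m c : bounded_colouring n m c ->
  exists h v, {homo h : i j / i < j} /\ monochromatic n c h v.
Proof.
elim: n m c => [|n IHn] m c c_lt; last exact: (ramsey_succ IHn c_lt).
by exists id, (c [::]); split=> // s _ /size0nil ->.
Qed.

Lemma simultaneous_ramsey n m (T : eqType) (P : seq T) (C : T -> seq nat -> nat) :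
  (forall p, p \in P -> bounded_colouring n m (C p)) ->
  exists h (v : T -> nat), {homo h : i j / i < j} /\
    forall p, p \in P -> monochromatic n (C p) h (v p).
Proof.
elim: P => [|p P IHP] C_lt; first by exists id, (fun=> 0); split.
have [h1 [v1 [h1_incr h1_mono]]] : exists h v, {homo h : i j / i < j} /\
    forall q, q \in P -> monochromatic n (C q) h (v q).
  by apply: IHP => q qP; apply: C_lt; rewrite inE qP orbT.
have [h2 [u [h2_incr h2_mono]]] :=
  ramsey (bounded_colouring_map h1_incr (C_lt p (mem_head p P))).
exists (h1 \o h2), (fun q => if q == p then u else v1 q); split=> [i j lt_ij|q].
  exact/h1_incr/h2_incr.
rewrite inE; case: eqP => [-> _|_ qP]; last exact: monochromatic_comp (h1_mono q qP).
by move=> s s_sorted s_size; rewrite map_comp; apply: h2_mono.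
Qed.

Local Open Scope fset_scope.

Section Interleave.
Variable K : nat.
Hypothesis K_gt0 : 0 < K.
Variable h : nat -> nat.
Hypothesis h_incr : {homo h : i j / i < j}.

Definition block (i : nat) : 'I_K := Ordinal (ltn_pmod i K_gt0).

Definition spread (i : nat) : omega_mul K := (block i, h i).

Definition interleave (x : omega_mul K) := spread (x.2 * K + x.1).

Lemma interleave_homo : {homo interleave : x y / omega_lt x y}.
Proof.
have code_mod (x : omega_mul K) : (x.2 * K + x.1) %% K = x.1.
  by rewrite modnMDl modn_small.
have block_code (x : omega_mul K) : block (x.2 * K + x.1) = x.1.
  by apply: val_inj; rewrite /= code_mod.
move=> x y; rewrite /omega_lt /interleave /spread /= !block_code !code_mod.
case/orP=> [->//|/andP[/eqP x1_y1 lt_x2y2]]; rewrite x1_y1 eqxx ltnn /=.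
by apply: h_incr; rewrite ltn_add2r ltn_pmul2r.
Qed.

Lemma fset_spread (A : {fset omega_mul K}) :
  (forall x, x \in A -> exists y, interleave y = x) ->
  exists s, [/\ sorted ltn s, size s = #|` A| & A = [fset x in map spread s]].
Proof.
move=> A_sub.
have [r r_A] : exists r, map spread r = enum_fset A.
  by apply: exists_map_preimage => x /A_sub[y <-]; exists (y.2 * K + y.1)%N.
have r_uniq : uniq r by apply: (@map_uniq _ _ spread); rewrite r_A fset_uniq.
exists (sort leq r); split.
- by rewrite ltn_sorted_uniq_leq sort_uniq r_uniq sort_sorted //; exact: leq_total.
- by rewrite size_sort -(size_map spread) r_A.
apply/fsetP => x; rewrite inE -[x \in A]/(x \in enum_fset A) -r_A.
by apply/perm_mem/perm_map; rewrite perm_sym perm_sort.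
Qed.

End Interleave.

Lemma omega0_big_ramsey n t : 0 < n -> big_ramsey_bound (@omega_lt 0) n t.
Proof.
move=> n_gt0 c _ COL _; exists (fun=> True); split.
  by exists id; split=> //; split=> // y _; exists y.
exists [::]; split=> // A A_card.
by have /fset0Pn[[[]]] : A != fset0 by rewrite -cardfs_gt0 A_card.
Qed.

Lemma omega_mul_big_ramsey n K : 0 < K -> big_ramsey_bound (@omega_lt K) n (K ^ n).
Proof.
move=> K_gt0 c _ COL COL_range.
pose types := enum {: n.-tuple 'I_K}.
pose C (p : n.-tuple 'I_K) s := COL [fset x in zip p s].
have C_lt p : p \in types -> bounded_colouring n c.+1 (C p).
  move=> _ s /(sorted_uniq ltn_trans ltnn) s_uniq s_size; rewrite ltnS.
  have /andP[_ //] : 0 < COL [fset x in zip p s] <= c.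
  apply: COL_range.
  by rewrite card_fseq undup_id ?zip_uniqr // size_zip size_tuple s_size minnn.
have [h [v [h_incr h_mono]]] := simultaneous_ramsey C_lt.
exists (fun y => exists x, interleave K_gt0 h x = y); split.
  exists (interleave K_gt0 h); split; first exact: interleave_homo.
  by split=> [x|y [x <-]]; exists x.
exists (map v types); split.
  by rewrite size_map -cardE card_tuple card_ord.
move=> A A_card A_sub.
have [s [s_sorted s_size ->]] := fset_spread A_sub.
have blocks_size : size (map (block K_gt0) s) == n by rewrite size_map s_size A_card.
pose p := Tuple blocks_size.
have p_type : p \in types by rewrite mem_enum.
rewrite /spread -zip_map -[zip _ _]/(zip p (map h s)) -/(C p _) h_mono ?s_size //.
exact: map_f.
Qed.

Theorem theorem5p1 (n k : nat) :
  (0 < n)%N || (0 < k)%N ->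
  big_ramsey_bound (@omega_lt k) n (k ^ n).
Proof.
case: k => [|k] nk_gt0; last exact: omega_mul_big_ramsey.
by apply: omega0_big_ramsey; rewrite orbF in nk_gt0.
Qed.
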